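(* Let $\operatorname{rk}L=2$ with basis $e_1,e_2$, dual basis $f_1,f_2$, $x_i=X^{f_i}$, $k=\omega(e_1,e_2)\ne0$, and let $m_1,m_2\ge0$. Then: (1) $\mathcal U(\{m_1\times e_2,\ m_2\times(-e_2)\})$ consists exactly of the Laurent polynomials $W=\sum_l c_l(x_1)x_2^l$, $c_l\in\mathcal Q[x_1^{\pm1}]$, such that $c_l$ is divisible by $(1+x_1^k)^{-m_1l}$ for $l\le0$ and by $(1+x_1^k)^{m_2l}$ for $l\ge0$; (2) $\mathcal U(\{m_1\times e_2,\ m_2\times(-e_2)\})=\mathcal Q\bigl[x_1^{\pm1},\ x_2(1+x_1^k)^{m_2},\ (1+x_1^k)^{m_1}/x_2\bigr]$.
   Context: For a lattice $L$ with skew-symmetric integral bilinear form $\omega$: $L^*=\mathrm{Hom}(L,\mathbb Z)$, $(\cdot,\cdot)$ the canonical pairing; $\mathcal Q=\mathbb Q(e^{2\pi i\mathbb Q})$ is $\mathbb Q$ with all roots of unity adjoined; $\mathcal Q[L^*]$ is the group algebra of $L^*$ with monomials $X^m$, and $\mathbb K_L$ its fraction field. For $v\in L$, $\mu_v^*$ is the $\mathcal Q$-algebra automorphism of $\mathbb K_L$ with $\mu_v^*(X^m)=X^m(1+X^{\omega(\cdot,v)})^{-(m,v)}$, where $\omega(\cdot,v)\in L^*$ is $w\mapsto\omega(w,v)$; e.g. $\mu_{e_2}^*(x_1,x_2)=(x_1,x_2/(1+x_1^k))$ and $\mu_{-e_2}^*(x_1,x_2)=(x_1,x_2(1+x_1^{-k}))$.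 An exchange collection is a finite tuple of vectors with multiplicity function $m_V$; $\{m_1\times u_1,m_2\times u_2\}$ denotes the collection with $u_j$ of multiplicity $m_j$. The upper bound is $\mathcal U(V)=\mathcal Q[L^*]\cap\bigcap_{v\in L}(\mu_v^* )^{m_V(v)}(\mathcal Q[L^*])\subset\mathbb K_L$. $\mathcal Q[g_1,\dots]$ denotes the $\mathcal Q$-subalgebra generated by the $g_i$. *)

From HB Require Import structures.
From mathcomp Require Import all_boot all_order all_algebra all_field.
From mathcomp Require Import fraction algC.
From mathcomp Require Import generic_quotient.
Set Implicit Arguments. Unset Strict Implicit. Unset Printing Implicit Defensive.
Import Order.TTheory GRing.Theory Num.Theory.
Local Open Scope ring_scope.

(* The base field Q = Q(e^{2 pi i Q}), realised inside algC as the smallest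
   subfield of algC containing all roots of unity. *)
Definition Qcyc (x : algC) : Prop :=
  forall S : algC -> Prop,
    S 0 -> S 1 ->
    (forall a b, S a -> S b -> S (a + b)) ->
    (forall a, S a -> S (- a)) ->
    (forall a b, S a -> S b -> S (a * b)) ->
    (forall a, S a -> S (a^-1)) ->
    (forall (n : nat) (z : algC), (0 < n)%N -> n.-unity_root z -> S z) ->
    S x.

(* Rank 2 lattice L = Z^2 with basis e1 = (1,0), e2 = (0,1); L^* = Z^2 with
   the dual basis f1, f2 and the standard pairing. *)
Definition lat := (int * int)%type.
Definition e1 : lat := (1, 0).
Definition e2 : lat := (0, 1).
Definition lneg (v : lat) : lat := (- v.1, - v.2).
Definition pairing (m v : lat) : int := m.1 * v.1 + m.2 * v.2.
Definition omega (k : int) (a b : lat) : int := k * (a.1 * b.2 - a.2 * b.1).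

(* Ambient field: fraction field of the polynomial ring in x1, x2
   ({poly {poly algC}}: outer variable x2, inner variable x1); it contains
   the fraction field K_L of Q[L^*]. *)
Definition K := {fraction {poly {poly algC}}}.
Definition tof (p : {poly {poly algC}}) : K := @FracField.tofrac _ p.
Definition cst (c : algC) : K := tof (c%:P%:P).
Definition x1 : K := tof (('X : {poly algC})%:P).
Definition x2 : K := tof 'X.
Definition mono (m : lat) : K := x1 ^ m.1 * x2 ^ m.2.

Definition laurent (f : K) : Prop :=
  exists s : seq (algC * lat),
    (forall t, t \in s -> Qcyc t.1) /\ f = \sum_(t <- s) cst t.1 * mono t.2.

Definition laurent1 (f : K) : Prop :=
  exists s : seq (algC * int),
    (forall t, t \in s -> Qcyc t.1) /\ f = \sum_(t <- s) cst t.1 * x1 ^ t.2.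

Definition evalK (y1 y2 : K) (p : {poly {poly algC}}) : K :=
  (map_poly (fun q : {poly algC} => (map_poly cst q).[y1]) p).[y2].

(* mu_v^*: the field automorphism with
   X^m |-> X^m (1 + X^{omega(.,v)})^{-(m,v)}, i.e. determined by
   x_i = X^{f_i} |-> x_i (1 + X^{omega(.,v)})^{-(f_i,v)} *)
Definition mu (k : int) (v : lat) (f : K) : K :=
  let w : lat := (omega k e1 v, omega k e2 v) in
  let y1 := x1 * (1 + mono w) ^ (- pairing (1, 0) v) in
  let y2 := x2 * (1 + mono w) ^ (- pairing (0, 1) v) in
  evalK y1 y2 (\n_(repr f)) / evalK y1 y2 (\d_(repr f)).

(* upper bound of an exchange collection given by its multiplicity function *)
Definition upper_bound (k : int) (mV : lat -> nat) (f : K) : Prop :=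
  laurent f /\
  forall v : lat, exists g, laurent g /\ f = iter (mV v) (mu k v) g.

Definition mult_of (V : seq lat) (v : lat) : nat := count (pred1 v) V.

Definition Qsubalg_gen (gs : seq K) (f : K) : Prop :=
  forall S : K -> Prop,
    (forall c, Qcyc c -> S (cst c)) ->
    (forall g, g \in gs -> S g) ->
    (forall a b, S a -> S b -> S (a + b)) ->
    (forall a b, S a -> S b -> S (a * b)) ->
    S f.

(* Write u = 1 + x1^k.  The mutations in directions e2 and -e2 both fix x1
   and only rescale x2: mu_{e2} substitutes x2 |-> x2 u^-1 and mu_{-e2}
   substitutes x2 |-> x2 (1 + x1^-k) = x2 x1^-k u.  Both are instances of
   the field endomorphism Phi_r of K substituting x2 |-> x2 r, for r in the
   subfield C(x1) of rational functions of x1 alone.  A Laurent polynomial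
   W = sum_l c_l x2^l (c_l in Q[x1^+-1]) is sent by Phi_r^m to
   sum_l c_l r^(m l) x2^l, and the powers of x2 are linearly independent over
   C(x1); hence W = Phi_r^m g for a Laurent polynomial g iff every
   c_l r^(-m l) lies in Q[x1^+-1].  For r = u^-1, m = m1 and for
   r = x1^-k u, m = m2 this is exactly the divisibility condition of part (1).
   Part (2) follows: the upper bound is a Q-algebra containing the four
   generators, and conversely each term c_l x2^l allowed by (1) is a Laurent
   polynomial in x1 times a power of x2 u^m2 or of u^m1 / x2. *)
From HB Require Import structures.
From mathcomp Require Import all_boot all_order all_algebra all_field.
From mathcomp Require Import fraction algC.
From mathcomp Require Import generic_quotient.
From mathcomp Require Import zify.
Import Order.TTheory GRing.Theory Num.Theory.
Local Open Scope ring_scope.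
Local Open Scope quotient_scope.

Local Notation PP := {poly {poly algC}}.

(* [tof] is the canonical ring embedding of polynomials into their fraction
   field; declaring it as such lets the generic [rmorph*] lemmas apply. *)
HB.instance Definition _ := GRing.RMorphism.copy tof (@FracField.tofrac _ : PP -> K).

Lemma tof_eq0 (p : PP) : (tof p == 0) = (p == 0).
Proof. exact: tofrac_eq0. Qed.

Lemma tof_neq0 (p : PP) : p != 0 -> tof p != 0.
Proof. by rewrite tof_eq0. Qed.

Lemma tof_inj (p q : PP) : tof p = tof q -> p = q.
Proof. by move=> /eqP; rewrite /tof tofrac_eq => /eqP. Qed.

Lemma fracE (f : K) : f = tof (\n_(repr f)) / tof (\d_(repr f)).
Proof.
have hd : \d_(repr f) != 0 by apply: denom_ratioP.
apply: (mulIf (x := tof (\d_(repr f)))); rewrite ?mulfVK ?tof_neq0 //.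
rewrite -{1}[f]reprK /tof; set x := repr f.
unlock FracField.tofrac.
rewrite [X in X = _](_ : _ = FracField.mul (\pi_K x) (\pi_K (Ratio (\d_x) 1)))//.
rewrite -FracField.pi_mul; apply/eqmodP.
rewrite /= FracField.equivfE /FracField.mulf !numden_Ratio ?mulf_neq0 ?oner_neq0 //.
by rewrite !mulr1 [\d_x * _]mulrC.
Qed.

Lemma x1_neq0 : x1 != 0.
Proof. by rewrite /x1 tof_eq0 polyC_eq0 polyX_eq0. Qed.

Lemma x2_neq0 : x2 != 0.
Proof. by rewrite /x2 tof_eq0 polyX_eq0. Qed.

(* [x1rat f]: f lies in the subfield C(x1) of K of rational functions in x1
   alone; these are the "scalars" for x2-expansions. *)
Definition x1rat (f : K) : Prop :=
  exists p q : {poly algC}, q != 0 /\ f = tof p%:P / tof q%:P.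

Lemma tofC_neq0 {q : {poly algC}} : q != 0 -> tof q%:P != 0.
Proof. by rewrite tof_eq0 polyC_eq0. Qed.

Lemma x1rat_tof p : x1rat (tof p%:P).
Proof. by exists p, 1; rewrite oner_neq0 rmorph1 divr1. Qed.

Lemma x1ratD a b : x1rat a -> x1rat b -> x1rat (a + b).
Proof.
move=> [p [q [hq ->]]] [p' [q' [hq' ->]]].
exists (p * q' + p' * q), (q * q'); split; first by rewrite mulf_neq0.
by rewrite !polyCD !polyCM rmorphD !rmorphM addf_div ?tofC_neq0.
Qed.

Lemma x1ratM a b : x1rat a -> x1rat b -> x1rat (a * b).
Proof.
move=> [p [q [hq ->]]] [p' [q' [hq' ->]]].
exists (p * p'), (q * q'); split; first by rewrite mulf_neq0.
by rewrite !polyCM !rmorphM mulf_div.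
Qed.

Lemma x1ratN a : x1rat a -> x1rat (- a).
Proof.
move=> [p [q [hq ->]]]; exists (- p), q; split => //.
by rewrite polyCN rmorphN mulNr.
Qed.

Lemma x1ratV a : x1rat a -> x1rat a^-1.
Proof.
move=> [p [q [hq ->]]]; have [->|hp] := eqVneq p 0.
  by exists 0, 1; rewrite oner_neq0 !rmorph0 !mul0r invr0.
by exists q, p; rewrite hp invf_div.
Qed.

Lemma x1rat0 : x1rat 0. Proof. by rewrite -(rmorph0 tof) -polyC0; apply: x1rat_tof. Qed.
Lemma x1rat1 : x1rat 1. Proof. by rewrite -(rmorph1 tof) -polyC1; apply: x1rat_tof. Qed.

Lemma x1ratXn a n : x1rat a -> x1rat (a ^+ n).
Proof.
by move=> ha; elim: n => [|n ih]; [rewrite expr0; apply: x1rat1 | rewrite exprS; apply: x1ratM].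
Qed.

Lemma x1ratXz a (z : int) : x1rat a -> x1rat (a ^ z).
Proof.
move=> ha; case: z => n; first exact: x1ratXn.
by rewrite NegzE -exprnN; apply/x1ratV/x1ratXn.
Qed.

Lemma x1rat_cst c : x1rat (cst c). Proof. exact: x1rat_tof. Qed.
Lemma x1rat_x1 : x1rat x1. Proof. exact: x1rat_tof. Qed.

Lemma common_den n (a : nat -> K) : (forall i, (i < n)%N -> x1rat (a i)) ->
  exists2 D : {poly algC}, D != 0 & exists s : nat -> {poly algC},
    forall i, (i < n)%N -> a i = tof (s i)%:P / tof D%:P.
Proof.
elim: n => [|n ih] ha; first by exists 1; [exact: oner_neq0 | exists (fun _ => 0)].
have [D hD [s hs]] : exists2 D : {poly algC}, D != 0 & exists s : nat -> {poly algC},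
    forall i, (i < n)%N -> a i = tof (s i)%:P / tof D%:P.
  by apply: ih => i hi; apply: ha; apply: ltnW.
have [p [q [hq hn]]] := ha n (ltnSn n).
exists (D * q); first by rewrite mulf_neq0.
exists (fun i => if (i < n)%N then s i * q else p * D) => i.
have hDq : tof q%:P / tof q%:P = 1 by rewrite divff ?tofC_neq0.
rewrite ltnS leq_eqVlt => /orP [/eqP ->|hi]; rewrite ?ltnn ?hi !polyCM !rmorphM.
  by rewrite hn [tof D%:P * _]mulrC -mulf_div [_ / tof D%:P]divff ?tofC_neq0 // mulr1.
by rewrite hs // -mulf_div hDq mulr1.
Qed.

(* The powers of x2 are linearly independent over C(x1): clearing
   denominators reduces this to the vanishing of a polynomial in x2. *)
Lemma x2_powers_free n (a : nat -> K) : (forall i, (i < n)%N -> x1rat (a i)) ->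
  \sum_(i < n) a i * x2 ^+ i = 0 -> forall i, (i < n)%N -> a i = 0.
Proof.
move=> ha; have [D hD [s hs]] := @common_den n a ha.
have -> : \sum_(i < n) a i * x2 ^+ i = (tof D%:P)^-1 * tof (\poly_(i < n) s i : PP).
  rewrite poly_def rmorph_sum mulr_sumr; apply: eq_bigr => i _.
  by rewrite -mul_polyC rmorphM rmorphXn hs // mulrA [(_^-1) * _]mulrC.
move/eqP; rewrite mulf_eq0 invr_eq0 (negbTE (tofC_neq0 hD)) tof_eq0 => /eqP h0 i hi.
rewrite hs //; have := congr1 (fun p : PP => p`_i) h0.
by rewrite coef_poly hi coef0 => ->; rewrite polyC0 rmorph0 mul0r.
Qed.

Definition x2sum (N : nat) (c : int -> K) : K :=
  \sum_(i < (2 * N).+1) c (i%:Z - N%:Z) * x2 ^ (i%:Z - N%:Z).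

Lemma eq_x2sum N c c' : (forall l, c l = c' l) -> x2sum N c = x2sum N c'.
Proof. by move=> h; apply: eq_bigr => i _; rewrite h. Qed.

Lemma x2sumD N c c' : x2sum N (fun l => c l + c' l) = x2sum N c + x2sum N c'.
Proof. by rewrite /x2sum -big_split; apply: eq_bigr => i _; rewrite mulrDl. Qed.

Lemma x2sumB N c c' : x2sum N (fun l => c l - c' l) = x2sum N c - x2sum N c'.
Proof. by rewrite /x2sum -sumrB; apply: eq_bigr => i _; rewrite mulrBl. Qed.

Lemma x2sum0 N : x2sum N (fun _ => 0) = 0.
Proof. by rewrite /x2sum big1 // => i _; rewrite mul0r. Qed.

Lemma x2sum_single N (b : int) (a : K) : (absz b <= N)%N ->
  x2sum N (fun l => if l == b then a else 0) = a * x2 ^ b.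
Proof.
move=> hb; have hi0 : (absz (b + N%:Z)%R < (2 * N).+1)%N by lia.
rewrite /x2sum (bigD1 (Ordinal hi0)) //= big1 ?addr0.
  have -> : (absz (b + N%:Z)%R)%:Z = b + N%:Z by lia.
  by rewrite addrK eqxx.
move=> i hi; case: eqP => [h|]; last by rewrite mul0r.
by case/eqP: hi; apply: val_inj => /=; lia.
Qed.

(* Uniqueness of x2-expansions with coefficients in C(x1): multiply by x2^N
   and apply the independence of the powers of x2. *)
Lemma x2sum_inj N c c' : (forall l, x1rat (c l)) -> (forall l, x1rat (c' l)) ->
  x2sum N c = x2sum N c' -> forall l : int, (absz l <= N)%N -> c l = c' l.
Proof.
move=> hc hc' /eqP; rewrite -subr_eq0 -x2sumB => /eqP h0 l hl.
pose a i := c (i%:Z - N%:Z) - c' (i%:Z - N%:Z).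
have hsum : \sum_(i < (2 * N).+1) a i * x2 ^+ i = x2 ^+ N * x2sum N (fun l => c l - c' l).
  rewrite /x2sum mulr_sumr; apply: eq_bigr => i _; rewrite mulrCA; congr (_ * _).
  by rewrite -[x2 ^+ N]/(x2 ^ N%:Z) -expfzDr ?x2_neq0 // addrC subrK.
rewrite h0 mulr0 in hsum.
have := @x2_powers_free _ a _ hsum (absz (l + N%:Z)%R) _.
have e0 : (absz (l + N%:Z)%R)%:Z = l + N%:Z by lia.
rewrite /a e0 addrK => h; apply/eqP; rewrite -subr_eq0; apply/eqP; apply: h.
  by move=> i _; apply: x1ratD => //; apply: x1ratN.
lia.
Qed.

Definition emb (q : {poly algC}) : K := tof q%:P.
HB.instance Definition _ := GRing.RMorphism.copy emb (tof \o polyC).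

Definition ev2 (y : K) (p : PP) : K := (map_poly emb p).[y].

Lemma ev2D y p q : ev2 y (p + q) = ev2 y p + ev2 y q.
Proof. by rewrite /ev2 rmorphD hornerD. Qed.

Lemma ev2M y p q : ev2 y (p * q) = ev2 y p * ev2 y q.
Proof. by rewrite /ev2 rmorphM hornerM. Qed.

Lemma ev2C y q : ev2 y q%:P = emb q.
Proof. by rewrite /ev2 map_polyC hornerC. Qed.

Lemma ev2X y : ev2 y 'X = y.
Proof. by rewrite /ev2 map_polyX hornerX. Qed.

Lemma ev2_1 y : ev2 y 1 = 1.
Proof. by rewrite -polyC1 ev2C rmorph1. Qed.

Lemma ev2E y p : ev2 y p = \sum_(i < size p) emb p`_i * y ^+ i.
Proof. by rewrite /ev2 /map_poly horner_poly. Qed.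

Lemma evalK_x1 y p : evalK x1 y p = ev2 y p.
Proof.
rewrite /evalK /ev2; congr (_.[y]); apply: eq_map_poly => q.
rewrite /map_poly horner_poly -[in RHS](coefK q) poly_def rmorph_sum.
by apply: eq_bigr => i _; rewrite -mul_polyC rmorphM rmorphXn.
Qed.

Lemma ev2_inj r p : x1rat r -> r != 0 -> ev2 (x2 * r) p = 0 -> p = 0.
Proof.
move=> hr hr0 h.
have hz : \sum_(i < size p) (emb p`_i * r ^+ i) * x2 ^+ i = 0.
  rewrite -[RHS]h ev2E; apply: eq_bigr => i _.
  by rewrite exprMn -mulrA [x2 ^+ i * _]mulrC.
apply/polyP => i; rewrite coef0.
have [hi|hi] := ltnP i (size p); last by rewrite nth_default.
have /eqP := @x2_powers_free _ (fun j => emb p`_j * r ^+ j) (fun j _ => x1ratM _ _ (x1rat_tof _) (x1ratXn _ j hr)) hz i hi.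
by rewrite mulf_eq0 expf_eq0 (negbTE hr0) andbF orbF /emb tof_eq0 polyC_eq0 => /eqP.
Qed.

Definition Phi (r : K) (f : K) : K :=
  ev2 (x2 * r) (\n_(repr f)) / ev2 (x2 * r) (\d_(repr f)).

Section Substitution.
Variable r : K.
Hypothesis hr : x1rat r.
Hypothesis hr0 : r != 0.

Local Notation ev := (ev2 (x2 * r)).

Lemma ev_neq0 p : p != 0 -> ev p != 0.
Proof. by apply: contra => /eqP /(ev2_inj _ _ hr hr0) ->. Qed.

(* Phi r does not depend on the chosen representative of a fraction. *)
Lemma Phi_frac n d : d != 0 -> Phi r (tof n / tof d) = ev n / ev d.
Proof.
move=> hd; rewrite /Phi; set f := tof n / tof d.
have hd' : \d_(repr f) != 0 by apply: denom_ratioP.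
have /eqP := fracE f; rewrite {1}/f eqr_div ?tof_neq0 // -!rmorphM.
move=> /eqP /tof_inj he; apply/eqP; rewrite eqr_div ?ev_neq0 //.
by rewrite -!ev2M he.
Qed.

Lemma Phi_tof p : Phi r (tof p) = ev p.
Proof. by rewrite -[tof p]divr1 -(rmorph1 tof) Phi_frac ?oner_neq0 // ev2_1 divr1. Qed.

Lemma Phi0 : Phi r 0 = 0.
Proof. by rewrite -(rmorph0 tof) Phi_tof /ev2 map_poly0 horner0. Qed.

Lemma PhiD f g : Phi r (f + g) = Phi r f + Phi r g.
Proof.
rewrite (fracE f) (fracE g).
have hb : \d_(repr f) != 0 by apply: denom_ratioP.
have hd : \d_(repr g) != 0 by apply: denom_ratioP.
rewrite addf_div ?tof_neq0 // -!rmorphM -rmorphD !Phi_frac ?mulf_neq0 //.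
by rewrite addf_div ?ev_neq0 // ev2D !ev2M.
Qed.

Lemma PhiM f g : Phi r (f * g) = Phi r f * Phi r g.
Proof.
rewrite (fracE f) (fracE g).
have hb : \d_(repr f) != 0 by apply: denom_ratioP.
have hd : \d_(repr g) != 0 by apply: denom_ratioP.
by rewrite mulf_div -!rmorphM !Phi_frac ?mulf_neq0 // mulf_div !ev2M.
Qed.

Lemma PhiV f : Phi r f^-1 = (Phi r f)^-1.
Proof.
rewrite (fracE f); have hb : \d_(repr f) != 0 by apply: denom_ratioP.
have [->|ha] := eqVneq (\n_(repr f)) 0; first by rewrite rmorph0 mul0r invr0 Phi0 invr0.
by rewrite invf_div !Phi_frac // invf_div.
Qed.

Lemma PhiXz f (z : int) : Phi r (f ^ z) = Phi r f ^ z.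
Proof.
have PhiXn n : Phi r (f ^+ n) = Phi r f ^+ n.
  elim: n => [|n ih]; last by rewrite !exprS PhiM ih.
  by rewrite !expr0 -(rmorph1 tof) Phi_tof ev2_1.
by case: z => n; rewrite ?NegzE -?exprnN ?PhiV PhiXn.
Qed.

Lemma Phi_x1rat a : x1rat a -> Phi r a = a.
Proof. by move=> [p [q [hq ->]]]; rewrite Phi_frac ?polyC_eq0 // !ev2C. Qed.

Lemma Phi_x2 : Phi r x2 = x2 * r.
Proof. by rewrite /x2 Phi_tof ev2X. Qed.

Lemma iterD m f g : iter m (Phi r) (f + g) = iter m (Phi r) f + iter m (Phi r) g.
Proof. by elim: m => //= m ->; rewrite PhiD. Qed.

Lemma iterM m f g : iter m (Phi r) (f * g) = iter m (Phi r) f * iter m (Phi r) g.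
Proof. by elim: m => //= m ->; rewrite PhiM. Qed.

Lemma iter_sum m I (s : seq I) (P : pred I) (F : I -> K) :
  iter m (Phi r) (\sum_(i <- s | P i) F i) = \sum_(i <- s | P i) iter m (Phi r) (F i).
Proof.
apply: (big_morph _ (iterD m)).
by elim: m => //= m ->; rewrite Phi0.
Qed.

Lemma iter_x1rat m a : x1rat a -> iter m (Phi r) a = a.
Proof. by move=> ha; elim: m => //= m ->; rewrite Phi_x1rat. Qed.

Lemma iter_x2z m (b : int) : iter m (Phi r) (x2 ^ b) = x2 ^ b * r ^ (m%:Z * b).
Proof.
elim: m => [|m ih] /=; first by rewrite mul0r expr0z mulr1.
rewrite ih PhiM !PhiXz Phi_x2 Phi_x1rat // expfzMl -mulrA -expfzDr //.
by congr (_ * r ^ _); lia.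
Qed.

Lemma iter_x2sum m N c : (forall l, x1rat (c l)) ->
  iter m (Phi r) (x2sum N c) = x2sum N (fun l => c l * r ^ (m%:Z * l)).
Proof.
move=> hc; rewrite /x2sum iter_sum; apply: eq_bigr => i _.
by rewrite iterM iter_x1rat // iter_x2z mulrA mulrAC.
Qed.

End Substitution.

Lemma mu_e2 k f : mu k e2 f = Phi (1 + x1 ^ k)^-1 f.
Proof.
have h1 : omega k e1 e2 = k by rewrite /omega /=; lia.
have h2 : omega k e2 e2 = 0 by rewrite /omega /=; lia.
have h3 : pairing (1, 0) e2 = 0 by rewrite /pairing /=; lia.
have h4 : pairing (0, 1) e2 = 1 by rewrite /pairing /=; lia.
rewrite /mu /Phi /= h1 h2 h3 h4 /mono /= !expr0z !mulr1 !evalK_x1.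
by rewrite exprN1.
Qed.

Lemma mu_ne2 k f : mu k (lneg e2) f = Phi (1 + x1 ^ (- k)) f.
Proof.
have h1 : omega k e1 (lneg e2) = - k by rewrite /omega /=; lia.
have h2 : omega k e2 (lneg e2) = 0 by rewrite /omega /=; lia.
have h3 : pairing (1, 0) (lneg e2) = 0 by rewrite /pairing /=; lia.
have h4 : pairing (0, 1) (lneg e2) = -1 by rewrite /pairing /=; lia.
rewrite /mu /Phi /= h1 h2 h3 h4 /mono /= !expr0z !mulr1 !evalK_x1.
by rewrite opprK expr1z.
Qed.

Lemma Qcyc0 : Qcyc 0. Proof. by move=> S. Qed.
Lemma Qcyc1 : Qcyc 1. Proof. by move=> S. Qed.

Lemma QcycM a b : Qcyc a -> Qcyc b -> Qcyc (a * b).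
Proof.
move=> ha hb S h0 h1 hD hN hM hV hU.
exact: hM (ha S h0 h1 hD hN hM hV hU) (hb S h0 h1 hD hN hM hV hU).
Qed.

Lemma cstM a b : cst (a * b) = cst a * cst b.
Proof. by rewrite /cst !polyCM rmorphM. Qed.

Lemma cst0 : cst 0 = 0.
Proof. by rewrite /cst !polyC0 rmorph0. Qed.

Lemma cst1 : cst 1 = 1.
Proof. by rewrite /cst !polyC1 rmorph1. Qed.

(* 1 + x1^z never vanishes: at x1 = 1 the polynomial X^n + 1 takes the value 2. *)
Lemma one_add_x1z_neq0 (z : int) : 1 + x1 ^ z != 0.
Proof.
have XnD1_neq0 n : 1 + x1 ^+ n != 0.
  have -> : 1 + x1 ^+ n = tof ('X^n + 1)%:P.
    by rewrite polyCD polyC1 rmorphD rmorph1 addrC /x1 -rmorphXn -rmorphXn.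
  rewrite tof_eq0 polyC_eq0; apply/eqP => h0.
  have := congr1 (horner^~ 1) h0; rewrite /= horner0 hornerD hornerXn hornerC expr1n.
  by move/eqP; rewrite paddr_eq0 ?ler01 // oner_eq0.
case: z => n; first exact: XnD1_neq0.
have hx : x1 ^+ n.+1 != 0 by rewrite expf_neq0 // x1_neq0.
rewrite NegzE -exprnN; apply: contraNneq (XnD1_neq0 n.+1) => h.
have := congr1 (fun y => y * x1 ^+ n.+1) h.
by rewrite /= mul0r mulrDl mul1r mulVf // => <-; rewrite addrC.
Qed.

Lemma laurent1_0 : laurent1 0.
Proof. by exists [::]; rewrite big_nil. Qed.

Lemma laurent1_term c a : Qcyc c -> laurent1 (cst c * x1 ^ a).
Proof.
by move=> hc; exists [:: (c, a)]; rewrite big_seq1; split => // t; rewrite inE => /eqP ->.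
Qed.

Lemma laurent1D f g : laurent1 f -> laurent1 g -> laurent1 (f + g).
Proof.
move=> [s [hs ->]] [s' [hs' ->]]; exists (s ++ s'); rewrite big_cat; split => // t.
by rewrite mem_cat => /orP [/hs|/hs'].
Qed.

Lemma laurent1_sum I (s : seq I) (P : pred I) (F : I -> K) :
  (forall i, P i -> laurent1 (F i)) -> laurent1 (\sum_(i <- s | P i) F i).
Proof.
move=> h; elim: s => [|i s ih]; first by rewrite big_nil; exact: laurent1_0.
by rewrite big_cons; case: ifP => // hi; apply: laurent1D (h _ hi) ih.
Qed.

Lemma laurent1M f g : laurent1 f -> laurent1 g -> laurent1 (f * g).
Proof.
move=> [s [hs ->]] [s' [hs' ->]]; rewrite mulr_suml big_seq.
apply: laurent1_sum => t ht; exists [seq (t.1 * t'.1, t.2 + t'.2) | t' <- s']; split.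
  by move=> t'' /mapP [t' ht' ->] /=; apply: QcycM; [apply: hs | apply: hs'].
rewrite big_map mulr_sumr; apply: eq_bigr => t' _ /=.
by rewrite cstM expfzDr ?x1_neq0 // mulrACA.
Qed.

Lemma laurent1_cst c : Qcyc c -> laurent1 (cst c).
Proof. by move=> hc; rewrite -[cst c]mulr1 -(expr0z x1); apply: laurent1_term. Qed.

Lemma laurent1_1 : laurent1 1.
Proof. by rewrite -cst1; apply: laurent1_cst; exact: Qcyc1. Qed.

Lemma laurent1_x1z a : laurent1 (x1 ^ a).
Proof. by rewrite -[x1 ^ a]mul1r -cst1; apply: laurent1_term; exact: Qcyc1. Qed.

Lemma laurent1_one_add_x1z a : laurent1 (1 + x1 ^ a).
Proof. exact: laurent1D laurent1_1 (laurent1_x1z a). Qed.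

Lemma laurent1Xz f (z : int) : laurent1 f -> 0 <= z -> laurent1 (f ^ z).
Proof.
case: z => // n hf _; elim: n => [|n ih]; first by rewrite expr0z; exact: laurent1_1.
by rewrite -exprnP exprS; apply: laurent1M.
Qed.

Lemma laurent1_x1rat f : laurent1 f -> x1rat f.
Proof.
move=> [s [_ ->]]; elim: s => [|t s ih]; first by rewrite big_nil; exact: x1rat0.
rewrite big_cons; apply: x1ratD => //.
exact: x1ratM (x1rat_cst _) (x1ratXz _ _ x1rat_x1).
Qed.

Definition lsum (s : seq (algC * lat)) : K := \sum_(t <- s) cst t.1 * mono t.2.

Lemma laurentD f g : laurent f -> laurent g -> laurent (f + g).
Proof.
move=> [s [hs ->]] [s' [hs' ->]]; exists (s ++ s'); rewrite big_cat; split => // t.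
by rewrite mem_cat => /orP [/hs|/hs'].
Qed.

Lemma laurent_sum I (s : seq I) (P : pred I) (F : I -> K) :
  (forall i, P i -> laurent (F i)) -> laurent (\sum_(i <- s | P i) F i).
Proof.
move=> h; elim: s => [|i s ih]; first by exists [::]; rewrite !big_nil.
by rewrite big_cons; case: ifP => // hi; apply: laurentD (h _ hi) ih.
Qed.

Lemma laurentM f g : laurent f -> laurent g -> laurent (f * g).
Proof.
move=> [s [hs ->]] [s' [hs' ->]]; rewrite mulr_suml big_seq.
apply: laurent_sum => t ht.
exists [seq (t.1 * t'.1, (t.2.1 + t'.2.1, t.2.2 + t'.2.2)) | t' <- s']; split.
  by move=> t'' /mapP [t' ht' ->] /=; apply: QcycM; [apply: hs | apply: hs'].
rewrite big_map mulr_sumr; apply: eq_bigr => t' _ /=.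
rewrite cstM /mono /= (expfzDr _ _ x1_neq0) (expfzDr _ _ x2_neq0).
by rewrite mulrACA [_ * (x1 ^ _ * _)]mulrACA.
Qed.

Lemma laurent_of1 f : laurent1 f -> laurent f.
Proof.
move=> [s [hs ->]]; exists [seq (t.1, (t.2, 0)) | t <- s]; split.
  by move=> t /mapP [t' /hs ht' ->].
by rewrite big_map; apply: eq_bigr => t _; rewrite /mono /= expr0z mulr1.
Qed.

Lemma laurent_x2z b : laurent (x2 ^ b).
Proof.
exists [:: (1, (0, b))]; split; first by move=> t; rewrite inE => /eqP ->; exact: Qcyc1.
by rewrite big_seq1 cst1 mul1r /mono /= expr0z mul1r.
Qed.

Lemma laurent_x2sum N c : (forall l, laurent1 (c l)) -> laurent (x2sum N c).
Proof.
move=> hc; apply: laurent_sum => i _.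
by apply: laurentM; [apply: laurent_of1 | apply: laurent_x2z].
Qed.

Section GeneratedSubalgebra.
Variable gs : seq K.

Lemma Qsubalg_mem g : g \in gs -> Qsubalg_gen gs g.
Proof. by move=> hg S _ hS _ _; apply: hS. Qed.

Lemma Qsubalg_cst c : Qcyc c -> Qsubalg_gen gs (cst c).
Proof. by move=> hc S hS _ _ _; apply: hS. Qed.

Lemma Qsubalg_D a b : Qsubalg_gen gs a -> Qsubalg_gen gs b -> Qsubalg_gen gs (a + b).
Proof. by move=> ha hb S h1 h2 hD hM; apply: hD (ha S h1 h2 hD hM) (hb S h1 h2 hD hM). Qed.

Lemma Qsubalg_M a b : Qsubalg_gen gs a -> Qsubalg_gen gs b -> Qsubalg_gen gs (a * b).
Proof. by move=> ha hb S h1 h2 hD hM; apply: hM (ha S h1 h2 hD hM) (hb S h1 h2 hD hM). Qed.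

Lemma Qsubalg_Xn a n : Qsubalg_gen gs a -> Qsubalg_gen gs (a ^+ n).
Proof.
move=> ha; elim: n => [|n ih]; last by rewrite exprS; apply: Qsubalg_M.
by rewrite expr0 -cst1; apply: Qsubalg_cst; exact: Qcyc1.
Qed.

Lemma Qsubalg_laurent1 d : x1 \in gs -> x1^-1 \in gs -> laurent1 d -> Qsubalg_gen gs d.
Proof.
move=> h1 h1V [s [hs ->]]; elim: s hs => [|t s ih] hs.
  by rewrite big_nil -cst0; apply: Qsubalg_cst; exact: Qcyc0.
rewrite big_cons; apply: Qsubalg_D; last by apply: ih => t' ht'; apply: hs; rewrite inE ht' orbT.
apply: Qsubalg_M; first by apply: Qsubalg_cst; apply: hs; rewrite inE eqxx.
case: t.2 => n; first by apply: Qsubalg_Xn; apply: Qsubalg_mem.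
by rewrite NegzE -exprnN -exprVn; apply: Qsubalg_Xn; apply: Qsubalg_mem.
Qed.

End GeneratedSubalgebra.

Definition x2deg (s : seq (algC * lat)) : nat := \max_(t <- s) absz t.2.2.

Definition coef2 (s : seq (algC * lat)) (l : int) : K :=
  \sum_(t <- s | t.2.2 == l) cst t.1 * x1 ^ t.2.1.

Lemma x2deg_ge t s : t \in s -> (absz t.2.2 <= x2deg s)%N.
Proof. by move=> ht; exact: (@leq_bigmax_seq _ _ predT (fun t : algC * lat => absz t.2.2) t ht isT). Qed.

Lemma laurent1_coef2 s l : (forall t, t \in s -> Qcyc t.1) -> laurent1 (coef2 s l).
Proof.
move=> hs; rewrite /coef2 big_seq_cond; apply: laurent1_sum => t /andP [ht _].
by apply: laurent1_term; apply: hs.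
Qed.

Lemma coef2_out s l : (x2deg s < absz l)%N -> coef2 s l = 0.
Proof.
move=> hl; rewrite /coef2 big1_seq // => t /andP [/eqP htl /x2deg_ge].
by rewrite htl; lia.
Qed.

Lemma lsum_x2sum s N : (x2deg s <= N)%N -> lsum s = x2sum N (coef2 s).
Proof.
elim: s => [|t s ih]; rewrite /x2deg ?big_cons => hN.
  by rewrite /lsum big_nil -(x2sum0 N); apply: eq_x2sum => l; rewrite /coef2 big_nil.
have [ht hs] : (absz t.2.2 <= N)%N /\ (x2deg s <= N)%N by move: hN; rewrite geq_max => /andP.
rewrite /lsum big_cons -/(lsum s) ih // /mono mulrA -(x2sum_single _ _ _ ht) -x2sumD.
apply: eq_x2sum => l; rewrite /coef2 big_cons.
by have [->|_] := eqVneq l t.2.2; rewrite ?add0r.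
Qed.

Definition laurent_image (m : nat) (r W : K) : Prop :=
  exists2 g, laurent g & W = iter m (Phi r) g.

Section CoefficientCriterion.
Variables (m : nat) (r : K).
Hypothesis hr : x1rat r.
Hypothesis hr0 : r != 0.

Lemma laurent_imageD W W' :
  laurent_image m r W -> laurent_image m r W' -> laurent_image m r (W + W').
Proof.
move=> [g hg ->] [g' hg' ->]; exists (g + g'); first exact: laurentD.
by rewrite iterD.
Qed.

Lemma laurent_imageM W W' :
  laurent_image m r W -> laurent_image m r W' -> laurent_image m r (W * W').
Proof.
move=> [g hg ->] [g' hg' ->]; exists (g * g'); first exact: laurentM.
by rewrite iterM.
Qed.

(* If lsum s = Phi_r^m (lsum s'), the x2-coefficients satisfy
   c_l(s) = c_l(s') r^(m l): compare expansions of a common width. *)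
Lemma coef2_iter s s' : (forall t, t \in s -> Qcyc t.1) -> (forall t, t \in s' -> Qcyc t.1) ->
  lsum s = iter m (Phi r) (lsum s') -> forall l, coef2 s l = coef2 s' l * r ^ (m%:Z * l).
Proof.
move=> hs hs'; set N := maxn (x2deg s) (x2deg s').
have hc u l : (forall t, t \in u -> Qcyc t.1) -> x1rat (coef2 u l).
  by move=> hu; apply/laurent1_x1rat/laurent1_coef2.
rewrite (lsum_x2sum s N) ?leq_maxl // (lsum_x2sum s' N) ?leq_maxr //.
rewrite iter_x2sum // => [E l|]; last by move=> l; apply: hc.
have [hl|hl] := leqP (absz l) N.
  apply: (x2sum_inj _ _ _ _ _ E) => // l'; first exact: hc.
  by apply: x1ratM; [exact: hc | exact: x1ratXz].
by rewrite !coef2_out ?mul0r //; lia.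
Qed.

Lemma laurent_image_x2sum N c : (forall l, laurent1 (c l)) ->
  (forall l, laurent1 (c l * r ^ (- (m%:Z * l)))) -> laurent_image m r (x2sum N c).
Proof.
move=> hc hc'; exists (x2sum N (fun l => c l * r ^ (- (m%:Z * l)))).
  exact: laurent_x2sum.
rewrite iter_x2sum //; last by move=> l; apply: laurent1_x1rat.
by apply: eq_x2sum => l; rewrite -mulrA -expfzDr // addNr expr0z mulr1.
Qed.

End CoefficientCriterion.

Section Proposition.
Variables (k : int) (m1 m2 : nat).

(* [uk] is the binomial 1 + x1^k; mu_{-e2} rescales x2 by [vk] = x1^-k uk. *)
Definition uk : K := 1 + x1 ^ k.
Definition vk : K := 1 + x1 ^ (- k).
Definition VV : seq lat := nseq m1 e2 ++ nseq m2 (lneg e2).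
Local Notation U := (upper_bound k (mult_of VV)).

Lemma uk_neq0 : uk != 0. Proof. exact: one_add_x1z_neq0. Qed.
Lemma vk_neq0 : vk != 0. Proof. exact: one_add_x1z_neq0. Qed.
Lemma ukV_neq0 : uk^-1 != 0. Proof. by rewrite invr_eq0 uk_neq0. Qed.
Lemma laurent1_uk : laurent1 uk. Proof. exact: laurent1_one_add_x1z. Qed.
Lemma x1rat_ukV : x1rat uk^-1. Proof. exact/x1ratV/laurent1_x1rat/laurent1_uk. Qed.
Lemma x1rat_vk : x1rat vk.
Proof. exact/laurent1_x1rat/laurent1_one_add_x1z. Qed.

Lemma vk_expN (z : int) : vk ^ (- z) = x1 ^ (k * z) * uk ^ (- z).
Proof.
have -> : vk = x1 ^ (- k) * uk.
  by rewrite /vk /uk mulrDr mulr1 -expfzDr ?x1_neq0 // addNr expr0z addrC.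
by rewrite expfzMl exprz_exp mulrNN.
Qed.

Lemma laurent1_div_uk a (z : int) : laurent1 a ->
  (0 < z -> exists d, laurent1 d /\ a = uk ^ z * d) -> laurent1 (a * uk ^ (- z)).
Proof.
move=> ha hdiv; have [hz|hz] := lerP z 0.
  by apply: laurent1M => //; apply: laurent1Xz; [exact: laurent1_uk | rewrite oppr_ge0].
have [d [hd ->]] := hdiv hz.
by rewrite mulrAC -expfzDr ?uk_neq0 // subrr expr0z mul1r.
Qed.

Lemma mult_of_VV v :
  mult_of VV v = if v == e2 then m1 else if v == lneg e2 then m2 else 0%N.
Proof.
rewrite /mult_of /VV count_cat !count_nseq /=.
have [->|_] := eqVneq v e2; first by rewrite (_ : (lneg e2 == e2) = false) // mul1n mul0n addn0.
by rewrite eq_sym; case: (v == lneg e2); rewrite ?mul1n ?mul0n.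
Qed.

Lemma upper_boundE W :
  U W <-> [/\ laurent W, laurent_image m1 uk^-1 W & laurent_image m2 vk W].
Proof.
have mu1 : mu k e2 =1 Phi uk^-1 by move=> f; rewrite mu_e2.
have mu2 : mu k (lneg e2) =1 Phi vk by move=> f; rewrite mu_ne2.
split=> [[hW hv]|[hW [g hg eg] [h hh eh]]].
  have [g [hg eg]] := hv e2; have [h [hh eh]] := hv (lneg e2).
  move: eg eh; rewrite !mult_of_VV eqxx (_ : (lneg e2 == e2) = false) // => eg eh.
  by split => //; [exists g; rewrite // eg | exists h; rewrite // eh]; apply: eq_iter.
split => // v; rewrite mult_of_VV.
have [->|_] := eqVneq v e2; first by exists g; split; rewrite // eg; apply: eq_iter.
have [->|_] := eqVneq v (lneg e2); first by exists h; split; rewrite // eh; apply: eq_iter.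
by exists W.
Qed.

Definition admissible (a : K) (l : int) : Prop :=
  [/\ laurent1 a,
      l <= 0 -> exists d, laurent1 d /\ a = uk ^ (- (m1%:Z * l)) * d
    & 0 <= l -> exists d, laurent1 d /\ a = uk ^ (m2%:Z * l) * d].

Definition expansion_form (W : K) : Prop :=
  exists (N : nat) (c : int -> K),
    (forall l, laurent1 (c l)) /\
    (forall l : int, l <= 0 -> exists d, laurent1 d /\ c l = uk ^ (- (m1%:Z * l)) * d) /\
    (forall l : int, 0 <= l -> exists d, laurent1 d /\ c l = uk ^ (m2%:Z * l) * d) /\
    W = x2sum N c.

Lemma admissible_e2 a l : admissible a l -> laurent1 (a * uk^-1 ^ (- (m1%:Z * l))).
Proof.
case=> ha hneg _; rewrite exprz_inv.
apply: laurent1_div_uk => // hz; apply: hneg; rewrite leNgt.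
by apply: contraTN hz => hl; rewrite -leNgt oppr_le0 mulr_ge0 // ltW.
Qed.

Lemma admissible_ne2 a l : admissible a l -> laurent1 (a * vk ^ (- (m2%:Z * l))).
Proof.
case=> ha _ hpos; rewrite vk_expN mulrCA; apply: laurent1M; first exact: laurent1_x1z.
apply: laurent1_div_uk => // hz; apply: hpos; rewrite leNgt.
by apply: contraTN hz => hl; rewrite -leNgt mulr_ge0_le0 // ltW.
Qed.

Lemma upper_bound_expansion W : U W -> expansion_form W.
Proof.
move/upper_boundE => [[s [hs ->]] [g [sg [hsg ->]] eg] [h [sh [hsh ->]] eh]].
have cg := coef2_iter _ _ x1rat_ukV ukV_neq0 _ _ hs hsg eg.
have ch := coef2_iter _ _ x1rat_vk vk_neq0 _ _ hs hsh eh.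
exists (x2deg s), (coef2 s); split; first by move=> l; apply: laurent1_coef2.
split.
  move=> l _; exists (coef2 sg l); split; first exact: laurent1_coef2.
  by rewrite cg exprz_inv mulrC.
split; last exact: lsum_x2sum.
move=> l _; exists (coef2 sh l * x1 ^ (- (k * (m2%:Z * l)))); split.
  by apply: laurent1M; [apply: laurent1_coef2 | apply: laurent1_x1z].
rewrite ch -[m2%:Z * l]opprK vk_expN mulrA mulrC; congr (_ * _).
by rewrite opprK mulrN.
Qed.

Lemma expansion_upper_bound W : expansion_form W -> U W.
Proof.
move=> [N [c [hc [hneg [hpos ->]]]]].
have adm l : admissible (c l) l by split; [exact: hc | exact: hneg | exact: hpos].
apply/upper_boundE; split; first exact: laurent_x2sum.
  by apply: laurent_image_x2sum; [exact: x1rat_ukV | exact: ukV_neq0 | done |];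
    move=> l; apply: admissible_e2.
by apply: laurent_image_x2sum; [exact: x1rat_vk | exact: vk_neq0 | done |];
  move=> l; apply: admissible_ne2.
Qed.

(* The upper bound is a ring, as each substitution Phi_r is a ring morphism. *)
Lemma upper_boundD W W' : U W -> U W' -> U (W + W').
Proof.
move=> /upper_boundE [hW h1 h2] /upper_boundE [hW' h1' h2'].
apply/upper_boundE; split; first exact: laurentD.
  exact: laurent_imageD x1rat_ukV ukV_neq0 _ _ h1 h1'.
exact: laurent_imageD x1rat_vk vk_neq0 _ _ h2 h2'.
Qed.

Lemma upper_boundM W W' : U W -> U W' -> U (W * W').
Proof.
move=> /upper_boundE [hW h1 h2] /upper_boundE [hW' h1' h2'].
apply/upper_boundE; split; first exact: laurentM.
  exact: laurent_imageM x1rat_ukV ukV_neq0 _ _ h1 h1'.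
exact: laurent_imageM x1rat_vk vk_neq0 _ _ h2 h2'.
Qed.

Lemma admissible_upper_bound a l : admissible a l -> U (a * x2 ^ l).
Proof.
case=> ha hneg hpos; apply: expansion_upper_bound.
exists (absz l), (fun l' => if l' == l then a else 0).
have hz (z : int) : exists d, laurent1 d /\ (0 : K) = uk ^ z * d.
  by exists 0; split; [exact: laurent1_0 | rewrite mulr0].
split; first by move=> l'; case: eqP => _ //; exact: laurent1_0.
split; first by move=> l'; case: eqVneq => [->|_ _]; [exact: hneg | exact: hz].
split; first by move=> l'; case: eqVneq => [->|_ _]; [exact: hpos | exact: hz].
by rewrite x2sum_single.
Qed.

Lemma admissible0 a : laurent1 a -> admissible a 0.
Proof. by move=> ha; split=> // _; exists a; rewrite mulr0 ?oppr0 expr0z mul1r. Qed.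

Definition gens : seq K := [:: x1; x1^-1; x2 * uk ^+ m2; uk ^+ m1 / x2].

(* An admissible term is a Laurent polynomial in x1 times a power of
   x2 uk^m2 (if l >= 0) or of uk^m1 / x2 (if l <= 0). *)
Lemma admissible_gens a l : admissible a l -> Qsubalg_gen gens (a * x2 ^ l).
Proof.
have hL d : laurent1 d -> Qsubalg_gen gens d.
  by apply: Qsubalg_laurent1; [exact: mem_head | apply: mem_behead; exact: mem_head].
have hG3 : Qsubalg_gen gens (x2 * uk ^+ m2).
  by apply: Qsubalg_mem; do 2 apply: mem_behead; exact: mem_head.
have hG4 : Qsubalg_gen gens (uk ^+ m1 / x2).
  by apply: Qsubalg_mem; do 3 apply: mem_behead; exact: mem_head.
case=> ha hneg hpos; have [hl|hl] := lerP 0 l.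
  have [d [hd ->]] := hpos hl.
  have [n ->] : exists n : nat, l = n%:Z by exists (absz l); lia.
  have -> : uk ^ (m2%:Z * n%:Z) * d * x2 ^ n%:Z = d * (x2 * uk ^+ m2) ^+ n.
    rewrite -PoszM -!exprnP exprMn -exprM mulnC.
    by rewrite [d * _]mulrC [LHS]mulrAC [x2 ^+ n * _]mulrC.
  by apply: Qsubalg_M; [exact: hL | exact: Qsubalg_Xn].
have [d [hd ->]] := hneg (ltW hl).
have [n ->] : exists n : nat, l = - n%:Z by exists (absz l); lia.
have -> : uk ^ (- (m1%:Z * - n%:Z)) * d * x2 ^ (- n%:Z) = d * (uk ^+ m1 / x2) ^+ n.
  rewrite mulrN opprK -PoszM -exprnN -!exprnP expr_div_n -exprM mulnC.
  by rewrite [d * _]mulrC [LHS]mulrAC.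
by apply: Qsubalg_M; [exact: hL | exact: Qsubalg_Xn].
Qed.

Lemma upper_bound_gens W : U W -> Qsubalg_gen gens W.
Proof.
move/upper_bound_expansion => [N [c [hc [hneg [hpos ->]]]]].
apply: (big_ind (Qsubalg_gen gens)) => [|a b|i _]; last 1 first.
- by apply: admissible_gens; split; [exact: hc | exact: hneg | exact: hpos].
- by rewrite -cst0; apply: Qsubalg_cst; exact: Qcyc0.
- exact: Qsubalg_D.
Qed.

Lemma gens_upper_bound W : Qsubalg_gen gens W -> U W.
Proof.
move=> hW; apply: hW => [c hc|g|a b|a b]; last 2 first.
- exact: upper_boundD.
- exact: upper_boundM.
- rewrite -[cst c]mulr1 -(expr0z x2); apply/admissible_upper_bound/admissible0.
  exact: laurent1_cst.
rewrite !inE => /or4P [] /eqP ->.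
- rewrite -[x1]mulr1 -(expr0z x2); apply/admissible_upper_bound/admissible0.
  exact: laurent1_x1z 1.
- rewrite -[x1^-1]mulr1 -(expr0z x2); apply/admissible_upper_bound/admissible0.
  by rewrite -exprN1; exact: laurent1_x1z.
- rewrite mulrC -[x2]expr1z; apply: admissible_upper_bound; split.
  + by rewrite exprnP; apply: laurent1Xz; [exact: laurent1_uk |].
  + by rewrite ler10.
  + by exists 1; rewrite mulr1 mulr1; split; [exact: laurent1_1 | ].
- rewrite -exprN1; apply: admissible_upper_bound; split.
  + by rewrite exprnP; apply: laurent1Xz; [exact: laurent1_uk |].
  + by exists 1; rewrite mulr1 mulrN1 opprK; split; [exact: laurent1_1 | ].
  + by rewrite oppr_ge0 ler10.
Qed.

End Proposition.

Theorem proposition3p6 (k : int) (m1 m2 : nat) (hk : k != 0) :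
  let V := nseq m1 e2 ++ nseq m2 (lneg e2) in
  let U := upper_bound k (mult_of V) in
  (forall W : K, U W <->
     exists (N : nat) (c : int -> K),
       (forall l, laurent1 (c l)) /\
       (forall l : int, l <= 0 ->
          exists d, laurent1 d /\ c l = (1 + x1 ^ k) ^ (- (m1%:Z * l)) * d) /\
       (forall l : int, 0 <= l ->
          exists d, laurent1 d /\ c l = (1 + x1 ^ k) ^ (m2%:Z * l) * d) /\
       W = \sum_(i < (2 * N).+1) c (i%:Z - N%:Z) * x2 ^ (i%:Z - N%:Z)) /\
  (forall W : K, U W <->
     Qsubalg_gen [:: x1; x1^-1; x2 * (1 + x1 ^ k) ^+ m2;
                     (1 + x1 ^ k) ^+ m1 / x2] W).
Proof.
move=> V U; split => W; split.
- exact: upper_bound_expansion.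
- exact: expansion_upper_bound.
- exact: upper_bound_gens.
- exact: gens_upper_bound.
Qed.
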